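(* Let $(A,\rho,[-,-])$ be a Lie algebroid and let $\nabla^{(1)},\nabla^{(2)},\nabla^{(3)}$ be flat linear connections on $(A,\rho)$, i.e. $R_{\nabla^{(i)}}=0$ for $i=1,2,3$. Then for all $u,v,w\in\underline{\mathrm{Sec}}(A)$, $$R_{[\nabla^{(1)},\nabla^{(2)},\nabla^{(3)}]}(u,v)w=2\nabla^{(2)}_{[u,v]}w+\sum_{i\neq j}(-1)^{i+j}[\nabla^{(i)}_u,\nabla^{(j)}_v]w,$$ where $[\nabla^{(1)},\nabla^{(2)},\nabla^{(3)}]:=\nabla^{(1)}-\nabla^{(2)}+\nabla^{(3)}$, the sum runs over ordered pairs $(i,j)$ with $i,j\in\{1,2,3\}$, $i\neq j$, and $[\nabla^{(i)}_u,\nabla^{(j)}_v]w:=\nabla^{(i)}_u\nabla^{(j)}_v w-(-1)^{\widetilde u\widetilde v}\nabla^{(j)}_v\nabla^{(i)}_u w$.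
   Context: All objects are $\mathbb{Z}_2$-graded (supergeometry); the Grassmann parity of an object $x$ is denoted $\widetilde{x}\in\mathbb{Z}_2$. An anchored vector bundle is a vector bundle $\pi: A\to M$ of supermanifolds with a vector bundle homomorphism over the identity $\rho: A\to\mathsf{T}M$; it induces an even $C^\infty(M)$-module map $\rho:\underline{\mathrm{Sec}}(A)\to\mathrm{Vect}(M)$, $\rho_u:=\rho(u)$. A Lie algebroid is an anchored vector bundle together with an $\mathbb{R}$-bilinear bracket $[-,-]$ on $\underline{\mathrm{Sec}}(A)$ such that $\widetilde{[u,v]}=\widetilde u+\widetilde v$, $[u,v]=-(-1)^{\widetilde u\widetilde v}[v,u]$, $[u,fv]=\rho_u(f)v+(-1)^{\widetilde u\widetilde f}f[u,v]$, and $[u,[v,w]]=[[u,v],w]+(-1)^{\widetilde u\widetilde v}[v,[u,w]]$ for all sections $u,v,w$ and $f\in C^\infty(M)$. A linear connection on $(A,\rho)$ is an $\mathbb{R}$-bilinear map $\nabla:\underline{\mathrm{Sec}}(A)\times\underline{\mathrm{Sec}}(A)\to\underline{\mathrm{Sec}}(A)$ with $\widetilde{\nabla_u v}=\widetilde u+\widetilde v$, $\nabla_{fu}v=f\nabla_u v$, and $\nabla_u(fv)=\rho_u(f)v+(-1)^{\widetilde u\widetilde f}f\nabla_u v$. The curvature of $\nabla$ is $R_\nabla(u,v)w:=\nabla_u\nabla_v w-(-1)^{\widetilde u\widetilde v}\nabla_v\nabla_u w-\nabla_{[u,v]}w$. *)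

(* Algebraic (Lie–Rinehart) model of a Lie algebroid on a
   supermanifold: C plays the role of C^oo(M) (a Z2-graded supercommutative
   R-algebra), S plays the role of Sec(A) (a Z2-graded C-module); the anchor
   sends sections to graded derivations (vector fields) of C. *)
From HB Require Import structures.
From mathcomp Require Import all_boot all_order all_algebra.
From mathcomp Require Import reals.
Set Implicit Arguments. Unset Strict Implicit. Unset Printing Implicit Defensive.
Import GRing.Theory Num.Theory.
Local Open Scope ring_scope.

Definition ksign {R : pzRingType} (a b : bool) : R := (-1) ^+ (a && b).

Definition is_grading (R : pzRingType) (V : lmodType R) (hom : bool -> pred V) :=
  [/\ forall b, hom b 0,
      forall b x y, hom b x -> hom b y -> hom b (x + y),
      forall b (r : R) x, hom b x -> hom b (r *: x),
      forall x, exists x0 x1, [/\ hom false x0, hom true x1 & x = x0 + x1]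
    & forall x, hom false x -> hom true x -> x = 0].

Definition is_supercomm_algebra (R : pzRingType) (C : lalgType R)
    (homC : bool -> pred C) :=
  [/\ is_grading homC,
      homC false 1,
      forall a b f g, homC a f -> homC b g -> homC (addb a b) (f * g)
    & forall a b f g, homC a f -> homC b g -> f * g = ksign a b * (g * f)].

Definition is_graded_module (R : pzRingType) (C : lalgType R) (S : lmodType R)
    (homC : bool -> pred C) (homS : bool -> pred S) (act : C -> S -> S) :=
  [/\ is_grading homS,
      [/\ forall f s t, act f (s + t) = act f s + act f t,
          forall f g s, act (f + g) s = act f s + act g s
        & forall (r : R) f s, act (r *: f) s = r *: act f s /\ act f (r *: s) = r *: act f s],
      forall f g s, act (f * g) s = act f (act g s),
      forall s, act 1 s = s
    & forall a b f s, homC a f -> homS b s -> homS (addb a b) (act f s)].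

(* a vector field on M: an R-linear graded derivation of C of parity a *)
Definition is_vector_field (R : pzRingType) (C : lalgType R)
    (homC : bool -> pred C) (a : bool) (X : C -> C) :=
  [/\ forall f g, X (f + g) = X f + X g,
      forall (r : R) f, X (r *: f) = r *: X f,
      forall b f, homC b f -> homC (addb a b) (X f)
    & forall b f g, homC b f -> X (f * g) = X f * g + ksign a b * (f * X g)].

Definition is_Lie_algebroid (R : pzRingType) (C : lalgType R) (S : lmodType R)
    (homC : bool -> pred C) (homS : bool -> pred S) (act : C -> S -> S)
    (rho : S -> C -> C) (br : S -> S -> S) :=
  [/\ is_supercomm_algebra homC,
      is_graded_module homC homS act,
      [/\ forall a u, homS a u -> is_vector_field homC a (rho u),
          forall u v g, rho (u + v) g = rho u g + rho v g,
          forall (r : R) u g, rho (r *: u) g = r *: rho u g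
        & forall f u g, rho (act f u) g = f * rho u g],
      [/\ forall u v w, br u (v + w) = br u v + br u w,
          forall u v w, br (u + v) w = br u w + br v w
        & forall (r : R) u v, br (r *: u) v = r *: br u v /\ br u (r *: v) = r *: br u v]
    & [/\ forall a b u v, homS a u -> homS b v -> homS (addb a b) (br u v),
          forall a b u v, homS a u -> homS b v -> br u v = - (ksign a b *: br v u),
          forall a d u f v, homS a u -> homC d f ->
            br u (act f v) = act (rho u f) v + ksign a d *: act f (br u v)
        & forall a b u v w, homS a u -> homS b v ->
            br u (br v w) = br (br u v) w + ksign a b *: br v (br u w)]].

Definition is_linear_connection (R : pzRingType) (C : lalgType R) (S : lmodType R)
    (homC : bool -> pred C) (homS : bool -> pred S) (act : C -> S -> S)
    (rho : S -> C -> C) (nab : S -> S -> S) :=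
  [/\ [/\ forall u v w, nab u (v + w) = nab u v + nab u w,
          forall u v w, nab (u + v) w = nab u w + nab v w
        & forall (r : R) u v, nab (r *: u) v = r *: nab u v /\ nab u (r *: v) = r *: nab u v],
      forall a b u v, homS a u -> homS b v -> homS (addb a b) (nab u v),
      forall f u v, nab (act f u) v = act f (nab u v)
    & forall a d u f v, homS a u -> homC d f ->
        nab u (act f v) = act (rho u f) v + ksign a d *: act f (nab u v)].

(* graded commutator [nab1_u, nab2_v] w, for u of parity a and v of parity b *)
Definition conn_comm (R : pzRingType) (S : lmodType R) (nab1 nab2 : S -> S -> S)
    (a b : bool) (u v w : S) : S :=
  nab1 u (nab2 v w) - ksign a b *: nab2 v (nab1 u w).

Definition curvature (R : pzRingType) (S : lmodType R) (br : S -> S -> S)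
    (nab : S -> S -> S) (a b : bool) (u v w : S) : S :=
  conn_comm nab nab a b u v w - nab (br u v) w.

Definition is_flat (R : pzRingType) (S : lmodType R) (homS : bool -> pred S)
    (br : S -> S -> S) (nab : S -> S -> S) :=
  forall a b u v w, homS a u -> homS b v -> curvature br nab a b u v w = 0.

Definition conn_triple (R : pzRingType) (S : lmodType R)
    (nab1 nab2 nab3 : S -> S -> S) : S -> S -> S :=
  fun u v => nab1 u v - nab2 u v + nab3 u v.

(* the family (nabla^(1), nabla^(2), nabla^(3)) indexed by 'I_3 = {0,1,2} *)
Definition conn_fam (R : pzRingType) (S : lmodType R)
    (nab1 nab2 nab3 : S -> S -> S) (i : 'I_3) : S -> S -> S :=
  match nat_of_ord i with 0 => nab1 | 1 => nab2 | _ => nab3 end.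

From HB Require Import structures.
From mathcomp Require Import all_boot all_order all_algebra.
From mathcomp Require Import reals.
Import GRing.Theory Num.Theory.
Local Open Scope ring_scope.

(* [nab1, nab2, nab3] is the signed combination sum_i (-1)^i nab_i.  The
   graded commutator is bilinear in the two connections (only additivity and
   R-linearity in the second argument are needed), so the curvature of the
   combination is sum_(i,j) (-1)^(i+j) [nab_i, nab_j] - sum_i (-1)^i nab_i([u,v]).
   The signs square to 1, so flatness turns each diagonal term into
   nab_i([u,v]), leaving sum_i (1 - (-1)^i) nab_i([u,v]) = 2 nab2([u,v]). *)

Definition conn_comb {R : pzRingType} {S : lmodType R} {I : finType}
    (c : I -> R) (nab : I -> S -> S -> S) : S -> S -> S :=
  fun u v => \sum_i c i *: nab i u v.

Lemma curvature_ext {R : pzRingType} {S : lmodType R} {br nab nab' : S -> S -> S}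
    {a b u v w} :
  (forall x y, nab x y = nab' x y) ->
  curvature br nab a b u v w = curvature br nab' a b u v w.
Proof. by move=> E; rewrite /curvature /conn_comm !E. Qed.

Lemma flat_conn_comm {R : pzRingType} {S : lmodType R} {homS : bool -> pred S}
    {br nab : S -> S -> S} {a b u v} w :
  is_flat homS br nab -> homS a u -> homS b v ->
  conn_comm nab nab a b u v w = nab (br u v) w.
Proof.
move=> flat hu hv; apply/eqP; rewrite -subr_eq0.
by rewrite -[_ - _]/(curvature br nab a b u v w) (flat a b).
Qed.

Section ConnectionCombination.

Context {R : comPzRingType} {S : lmodType R} {I : finType}.
Context {nab : I -> S -> S -> S}.
Hypothesis nabD : forall i u v w, nab i u (v + w) = nab i u v + nab i u w.
Hypothesis nabZ : forall i u (r : R) v, nab i u (r *: v) = r *: nab i u v.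

Lemma nab_sumr i u (J : Type) (r : seq J) (P : pred J) (F : J -> S) :
  nab i u (\sum_(j <- r | P j) F j) = \sum_(j <- r | P j) nab i u (F j).
Proof.
apply: (big_morph (nab i u)) => [x y|]; first exact: nabD.
by apply/(addrI (nab i u 0)); rewrite -nabD !addr0.
Qed.

Lemma conn_comb_comp (c d : I -> R) u v w :
  conn_comb c nab u (conn_comb d nab v w)
  = \sum_i \sum_j (c i * d j) *: nab i u (nab j v w).
Proof.
apply: eq_bigr => i _; rewrite nab_sumr scaler_sumr.
by apply: eq_bigr => j _; rewrite nabZ scalerA.
Qed.

Lemma conn_comm_comb (c d : I -> R) a b u v w :
  conn_comm (conn_comb c nab) (conn_comb d nab) a b u v w
  = \sum_i \sum_j (c i * d j) *: conn_comm (nab i) (nab j) a b u v w.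
Proof.
rewrite /conn_comm !conn_comb_comp [X in _ *: X]exchange_big /=.
rewrite scaler_sumr -sumrB; apply: eq_bigr => i _.
rewrite scaler_sumr -sumrB; apply: eq_bigr => j _.
by rewrite scalerBr !scalerA [ksign a b * _]mulrC (mulrC (d j)).
Qed.

Lemma curvature_comb {homS : bool -> pred S} {br : S -> S -> S} {c : I -> R}
    {a b u v} w :
  (forall i, c i ^+ 2 = 1) -> (forall i, is_flat homS br (nab i)) ->
  homS a u -> homS b v ->
  curvature br (conn_comb c nab) a b u v w
  = \sum_i (1 - c i) *: nab i (br u v) w
    + \sum_i \sum_(j | i != j) (c i * c j) *: conn_comm (nab i) (nab j) a b u v w.
Proof.
move=> c_sqr flat hu hv.
have split_diag i : \sum_j (c i * c j) *: conn_comm (nab i) (nab j) a b u v w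
    = nab i (br u v) w
      + \sum_(j | i != j) (c i * c j) *: conn_comm (nab i) (nab j) a b u v w.
  rewrite (bigD1 i) //= -expr2 c_sqr scale1r (flat_conn_comm w (flat i) hu hv).
  by congr (_ + _); apply: eq_bigl => j; rewrite eq_sym.
rewrite /curvature conn_comm_comb (eq_bigr _ (fun i _ => split_diag i)) big_split /=.
rewrite addrAC; congr (_ + _); rewrite -sumrB; apply: eq_bigr => i _.
by rewrite scalerBl scale1r.
Qed.

End ConnectionCombination.

Lemma conn_fam_ind {R : pzRingType} {S : lmodType R} (P : (S -> S -> S) -> Prop)
    (nab1 nab2 nab3 : S -> S -> S) :
  P nab1 -> P nab2 -> P nab3 -> forall i, P (conn_fam nab1 nab2 nab3 i).
Proof. by move=> ? ? ? [[|[|[|//]]] ?]. Qed.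

Lemma conn_tripleE {R : pzRingType} {S : lmodType R} (nab1 nab2 nab3 : S -> S -> S) u v :
  conn_triple nab1 nab2 nab3 u v
  = conn_comb (fun i : 'I_3 => (-1) ^+ i) (conn_fam nab1 nab2 nab3) u v.
Proof.
rewrite /conn_comb !big_ord_recl big_ord0 /= /bump /=.
by rewrite expr0 expr1 sqrrN expr1n !scale1r scaleN1r addr0 addrA.
Qed.

Theorem mainTheorem5 (R : realType) (C : lalgType R) (S : lmodType R)
    (homC : bool -> pred C) (homS : bool -> pred S) (act : C -> S -> S)
    (rho : S -> C -> C) (br : S -> S -> S) (nab1 nab2 nab3 : S -> S -> S) :
  is_Lie_algebroid homC homS act rho br ->
  is_linear_connection homC homS act rho nab1 ->
  is_linear_connection homC homS act rho nab2 ->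
  is_linear_connection homC homS act rho nab3 ->
  is_flat homS br nab1 -> is_flat homS br nab2 -> is_flat homS br nab3 ->
  forall (a b : bool) (u v w : S), homS a u -> homS b v ->
    curvature br (conn_triple nab1 nab2 nab3) a b u v w =
      2%:R *: nab2 (br u v) w
      + \sum_(i < 3) \sum_(j < 3 | i != j)
          ((-1) ^+ (i + j)%N : R) *:
            conn_comm (conn_fam nab1 nab2 nab3 i) (conn_fam nab1 nab2 nab3 j) a b u v w.
Proof.
move=> _ [[D1 _ Z1] _ _ _] [[D2 _ Z2] _ _ _] [[D3 _ Z3] _ _ _] F1 F2 F3 a b u v w hu hv.
set nab := conn_fam nab1 nab2 nab3.
have nabD i : forall u v w, nab i u (v + w) = nab i u v + nab i u w.
  exact: (conn_fam_ind (fun N => forall u v w, N u (v + w) = N u v + N u w)).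
have nabZ i : forall u (r : R) v, nab i u (r *: v) = r *: nab i u v.
  apply: (conn_fam_ind (fun N => forall u (r : R) v, N u (r *: v) = r *: N u v)).
  - by move=> x r y; case: (Z1 r x y).
  - by move=> x r y; case: (Z2 r x y).
  - by move=> x r y; case: (Z3 r x y).
rewrite (curvature_ext (conn_tripleE nab1 nab2 nab3)).
rewrite (curvature_comb nabD nabZ w (fun i => sqrr_sign _ i) _ hu hv); last first.
  exact: (conn_fam_ind (is_flat homS br)).
congr (_ + _); last by apply: eq_bigr => i _; apply: eq_bigr => j _; rewrite exprD.
rewrite !big_ord_recl big_ord0 /nab /conn_fam /= /bump /= addr0.
by rewrite expr0 subrr scale0r add0r expr1 opprK -signr_odd /= expr0 subrr scale0r addr0.
Qed.
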